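(* For the modular data of the quantum double of $S_3$, each of the trace six modular invariants $Z_{(22)},Z_2,Z_4,Z_7,Z_{22},Z_{33},Z_{(33)}$ has, up to equivalence, exactly one matching nimrep.
   Context: Primaries $0,\dots,7$, all self-conjugate, with $S=\frac16\begin{pmatrix}1&1&2&2&2&2&3&3\\1&1&2&2&2&2&-3&-3\\2&2&4&-2&-2&-2&0&0\\2&2&-2&4&-2&-2&0&0\\2&2&-2&-2&-2&4&0&0\\2&2&-2&-2&4&-2&0&0\\3&-3&0&0&0&0&3&-3\\3&-3&0&0&0&0&-3&3\end{pmatrix}$, fusion coefficients $N_{\lambda\mu}^\nu=\sum_\rho S_{\lambda\rho}S_{\mu\rho}\overline{S_{\nu\rho}}/S_{0\rho}$. Matrices are written as $\sum Z_{\lambda\mu}\chi_\lambda\chi_\mu^*$, and $st^*$ for linear forms is the matrix of products of coefficients. $Z_2$ = permutation matrix of the transposition $2\leftrightarrow3$ on $\{0,\dots,7\}$. $Z_4=|\chi_0+\chi_1+\chi_2+\chi_3|^2-(\chi_2\chi_3^*+\chi_3\chi_2^*-|\chi_2|^2-|\chi_3|^2)$. $Z_7=|\chi_0+\chi_1|^2+2|\chi_4|^2+2|\chi_5|^2+2\chi_2\chi_3^*+2\chi_3\chi_2^*$. With $s_2=\chi_0+\chi_1+2\chi_2$, $s_3=\chi_0+\chi_1+2\chi_3$: $Z_{22}=s_2s_2^*$, $Z_{33}=s_3s_3^*$. $Z_{(22)}=|\chi_0+\chi_2|^2+|\chi_1+\chi_2|^2+|\chi_6|^2+|\chi_7|^2$,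 $Z_{(33)}=|\chi_0+\chi_3|^2+|\chi_1+\chi_3|^2+|\chi_6|^2+|\chi_7|^2$. A nimrep of dimension $n$: non-negative integer $n\times n$ matrices $G_\lambda$ with $G_0=I$, $G_{\bar\lambda}=G_\lambda^t$, $G_\lambda G_\mu=\sum_\nu N_{\lambda\mu}^\nu G_\nu$; nimreps are equivalent if conjugate by a common permutation matrix. $\mathrm{Exp}(Z)$ is the multiset with $Z_{\mu\mu}$ copies of $\mu$. A nimrep matches $Z$ if $n=\mathrm{Tr}\,Z$ and the $G_\lambda$ are simultaneously unitarily diagonalisable with joint eigenvalues $(S_{\lambda\mu}/S_{0\mu})_\lambda$, $\mu$ running through $\mathrm{Exp}(Z)$ with multiplicity. *)

From HB Require Import structures.
From mathcomp Require Import all_boot all_order all_fingroup all_algebra all_field.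
Set Implicit Arguments. Unset Strict Implicit. Unset Printing Implicit Defensive.
Import Order.TTheory GRing.Theory Num.Theory.
Local Open Scope ring_scope.

Definition mxl {R : Type} (d : R) (l : seq (seq R)) : 'M[R]_8 :=
  \matrix_(i < 8, j < 8) nth d (nth [::] l i) j.

Definition S6 : 'M[int]_8 := mxl 0
  [:: [:: 1; 1; 2; 2; 2; 2; 3; 3];
      [:: 1; 1; 2; 2; 2; 2; -3; -3];
      [:: 2; 2; 4; -2; -2; -2; 0; 0];
      [:: 2; 2; -2; 4; -2; -2; 0; 0];
      [:: 2; 2; -2; -2; -2; 4; 0; 0];
      [:: 2; 2; -2; -2; 4; -2; 0; 0];
      [:: 3; -3; 0; 0; 0; 0; 3; -3];
      [:: 3; -3; 0; 0; 0; 0; -3; 3]].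

Definition Smat : 'M[algC]_8 := \matrix_(i, j) ((S6 i j)%:~R / 6%:R).

Definition conjp (l : 'I_8) : 'I_8 := l.

Definition fusion (l m n : 'I_8) : algC :=
  \sum_(r < 8) Smat l r * Smat m r * (Smat n r)^* / Smat ord0 r.

Definition natmx n (A : 'M[nat]_n) : 'M[algC]_n := map_mx (fun k => k%:R) A.

Definition is_nimrep n (G : 'I_8 -> 'M[nat]_n) : Prop :=
  [/\ G ord0 = 1%:M,
      forall l, G (conjp l) = (G l)^T
    & forall l m, natmx (G l *m G m) = \sum_(v < 8) fusion l m v *: natmx (G v)].

Definition nimrep_equiv n (G1 G2 : 'I_8 -> 'M[nat]_n) : Prop :=
  exists s : 'S_n, forall l, G2 l = perm_mx s *m G1 l *m (perm_mx s)^T.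

Definition ctrans n (U : 'M[algC]_n) : 'M[algC]_n := (map_mx Num.conj_op U)^T.

Definition matches (Z : 'M[nat]_8) n (G : 'I_8 -> 'M[nat]_n) : Prop :=
  [/\ n = \tr Z, is_nimrep G &
      exists (U : 'M[algC]_n) (e : 'I_n -> 'I_8),
        [/\ U *m ctrans U = 1%:M,
            (* e enumerates Exp(Z) with multiplicity *)
            forall mu, #|[set i | e i == mu]| = Z mu mu
          & forall l, natmx (G l) =
              ctrans U *m diag_mx (\row_i (Smat l (e i) / Smat ord0 (e i))) *m U]].

(* Z_(22) = |x0+x2|^2+|x1+x2|^2+|x6|^2+|x7|^2 *)
Definition Zp22 : 'M[nat]_8 := mxl 0%N
  [:: [:: 1; 0; 1; 0; 0; 0; 0; 0];
      [:: 0; 1; 1; 0; 0; 0; 0; 0];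
      [:: 1; 1; 2; 0; 0; 0; 0; 0];
      [:: 0; 0; 0; 0; 0; 0; 0; 0];
      [:: 0; 0; 0; 0; 0; 0; 0; 0];
      [:: 0; 0; 0; 0; 0; 0; 0; 0];
      [:: 0; 0; 0; 0; 0; 0; 1; 0];
      [:: 0; 0; 0; 0; 0; 0; 0; 1]]%N.
(* Z_(33) = |x0+x3|^2+|x1+x3|^2+|x6|^2+|x7|^2 *)
Definition Zp33 : 'M[nat]_8 := mxl 0%N
  [:: [:: 1; 0; 0; 1; 0; 0; 0; 0];
      [:: 0; 1; 0; 1; 0; 0; 0; 0];
      [:: 0; 0; 0; 0; 0; 0; 0; 0];
      [:: 1; 1; 0; 2; 0; 0; 0; 0];
      [:: 0; 0; 0; 0; 0; 0; 0; 0];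
      [:: 0; 0; 0; 0; 0; 0; 0; 0];
      [:: 0; 0; 0; 0; 0; 0; 1; 0];
      [:: 0; 0; 0; 0; 0; 0; 0; 1]]%N.
(* Z_2 = permutation matrix of the transposition 2 <-> 3 *)
Definition Z2 : 'M[nat]_8 := mxl 0%N
  [:: [:: 1; 0; 0; 0; 0; 0; 0; 0];
      [:: 0; 1; 0; 0; 0; 0; 0; 0];
      [:: 0; 0; 0; 1; 0; 0; 0; 0];
      [:: 0; 0; 1; 0; 0; 0; 0; 0];
      [:: 0; 0; 0; 0; 1; 0; 0; 0];
      [:: 0; 0; 0; 0; 0; 1; 0; 0];
      [:: 0; 0; 0; 0; 0; 0; 1; 0];
      [:: 0; 0; 0; 0; 0; 0; 0; 1]]%N.
(* Z_4 = |x0+x1+x2+x3|^2 - (x2 x3^* + x3 x2^* - |x2|^2 - |x3|^2) *)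
Definition Z4 : 'M[nat]_8 := mxl 0%N
  [:: [:: 1; 1; 1; 1; 0; 0; 0; 0];
      [:: 1; 1; 1; 1; 0; 0; 0; 0];
      [:: 1; 1; 2; 0; 0; 0; 0; 0];
      [:: 1; 1; 0; 2; 0; 0; 0; 0];
      [:: 0; 0; 0; 0; 0; 0; 0; 0];
      [:: 0; 0; 0; 0; 0; 0; 0; 0];
      [:: 0; 0; 0; 0; 0; 0; 0; 0];
      [:: 0; 0; 0; 0; 0; 0; 0; 0]]%N.
(* Z_7 = |x0+x1|^2 + 2|x4|^2 + 2|x5|^2 + 2 x2 x3^* + 2 x3 x2^* *)
Definition Z7 : 'M[nat]_8 := mxl 0%N
  [:: [:: 1; 1; 0; 0; 0; 0; 0; 0];
      [:: 1; 1; 0; 0; 0; 0; 0; 0];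
      [:: 0; 0; 0; 2; 0; 0; 0; 0];
      [:: 0; 0; 2; 0; 0; 0; 0; 0];
      [:: 0; 0; 0; 0; 2; 0; 0; 0];
      [:: 0; 0; 0; 0; 0; 2; 0; 0];
      [:: 0; 0; 0; 0; 0; 0; 0; 0];
      [:: 0; 0; 0; 0; 0; 0; 0; 0]]%N.
(* Z_22 = s2 s2^*, s2 = x0 + x1 + 2 x2 *)
Definition Z22 : 'M[nat]_8 := mxl 0%N
  [:: [:: 1; 1; 2; 0; 0; 0; 0; 0];
      [:: 1; 1; 2; 0; 0; 0; 0; 0];
      [:: 2; 2; 4; 0; 0; 0; 0; 0];
      [:: 0; 0; 0; 0; 0; 0; 0; 0];
      [:: 0; 0; 0; 0; 0; 0; 0; 0];
      [:: 0; 0; 0; 0; 0; 0; 0; 0];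
      [:: 0; 0; 0; 0; 0; 0; 0; 0];
      [:: 0; 0; 0; 0; 0; 0; 0; 0]]%N.
(* Z_33 = s3 s3^*, s3 = x0 + x1 + 2 x3 *)
Definition Z33 : 'M[nat]_8 := mxl 0%N
  [:: [:: 1; 1; 0; 2; 0; 0; 0; 0];
      [:: 1; 1; 0; 2; 0; 0; 0; 0];
      [:: 0; 0; 0; 0; 0; 0; 0; 0];
      [:: 2; 2; 0; 4; 0; 0; 0; 0];
      [:: 0; 0; 0; 0; 0; 0; 0; 0];
      [:: 0; 0; 0; 0; 0; 0; 0; 0];
      [:: 0; 0; 0; 0; 0; 0; 0; 0];
      [:: 0; 0; 0; 0; 0; 0; 0; 0]]%N.

(* A nimrep matching Z has dimension tr Z = 6 and, taking traces in its
   diagonalisation, tr G_l = sum_mu Z_mu,mu S_l,mu / S_0,mu: all its traces are fixed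
   by Z.  The fusion rules of D(S_3) are triangular (N_ll^v = 0 for v > l), so the
   relation G_l G_l^t = sum_v N_ll^v G_v prescribes the Gram matrix of the rows of G_l
   in terms of G_0, ..., G_(l-1) and G_l itself, which together with tr G_l leaves
   finitely many symmetric non-negative integer candidates; when a product G_a G_c
   with a, c < l contains G_l once, G_l is even determined by subtraction.  Enumerating
   label by label, pruning with the fusion relations among known labels, therefore
   reaches every nimrep with the prescribed traces.  For each Z a computation shows
   that every candidate for G_1 is conjugate, by a permutation of the six vertices, to
   G_1 of one explicit nimrep, and that once G_1 is fixed every complete candidate is
   conjugate to that nimrep, which matches Z through an explicit integral orthogonal
   eigenbasis. *)

From HB Require Import structures.
From mathcomp Require Import all_boot all_order all_fingroup all_algebra all_field.
From mathcomp Require Import ring.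
Set Implicit Arguments. Unset Strict Implicit. Unset Printing Implicit Defensive.
Import Order.TTheory GRing.Theory Num.Theory.

(* [vm_compute] evaluates both arguments of [&&] and [||]; these variants stop at the
   first decisive element. *)
Fixpoint lazy_all T (a : pred T) (s : seq T) : bool :=
  if s is x :: s' then (if a x then lazy_all a s' else false) else true.

Fixpoint lazy_has T (a : pred T) (s : seq T) : bool :=
  if s is x :: s' then (if a x then true else lazy_has a s') else false.

Lemma lazy_allE T (a : pred T) s : lazy_all a s = all a s.
Proof. by elim: s => //= x s ->; case: (a x). Qed.

Lemma lazy_hasE T (a : pred T) s : lazy_has a s = has a s.
Proof. by elim: s => //= x s ->; case: (a x). Qed.

Lemma sumn_mkseq_leq (F : nat -> nat) d i : i < d -> F i <= sumn (mkseq F d).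
Proof.
elim: d => // d' IHd; rewrite ltnS leq_eqVlt => /orP[/eqP->|/IHd le_F].
  by rewrite /mkseq -addn1 iotaD map_cat sumn_cat /= add0n addn0 leq_addl.
by rewrite /mkseq -addn1 iotaD map_cat sumn_cat (leq_trans le_F) ?leq_addr.
Qed.

Lemma eq_sumn_mkseq (F G : nat -> nat) d :
  (forall k, k < d -> F k = G k) -> sumn (mkseq F d) = sumn (mkseq G d).
Proof. by move=> eqFG; congr sumn; apply/eq_in_map => k; rewrite mem_iota => /andP[_ /eqFG]. Qed.

Lemma all_iota (a : pred nat) k : all a (iota 0 k) -> forall i, i < k -> a i.
Proof. by move=> /allP a_k i lt_ik; apply: a_k; rewrite mem_iota. Qed.

Lemma ohead_in (T : eqType) (s : seq T) x : ohead s = Some x -> x \in s.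
Proof. by case: s => //= y s [->]; rewrite mem_head. Qed.

Lemma big_ord_sumn n (F : 'I_n.+1 -> nat) :
  \sum_(k < n.+1) F k = sumn (mkseq (fun k => F (inord k)) n.+1).
Proof.
rewrite (eq_bigr (fun k : 'I_n.+1 => F (inord k))) => [|k _]; last by rewrite inord_val.
by rewrite -(big_mkord xpredT (fun k => F (inord k))) /index_iota subn0 /mkseq sumnE big_map.
Qed.

Lemma big_ord_foldr (V : nmodType) k (F : nat -> V) :
  (\sum_(i < k) F i = foldr +%R 0 [seq F i | i <- iota 0 k])%R.
Proof. by rewrite foldrE big_map -(big_mkord xpredT) /index_iota subn0. Qed.

Lemma big_seq_count (V : nmodType) k (s : seq nat) (F : nat -> V) : all (gtn k) s ->
  (\sum_(x <- s) F x = \sum_(v < k) F v *+ count_mem (v : nat) s)%R.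
Proof.
elim: s => [|x s IHs] /=; first by rewrite big_nil big1 // => v _; rewrite mulr0n.
case/andP=> lt_xk /IHs IH; rewrite big_cons IH.
under [RHS]eq_bigr do rewrite mulrnDr.
rewrite big_split /=; congr (_ + _)%R.
rewrite (bigD1 (Ordinal lt_xk)) //= eqxx mulr1n big1 ?addr0 // => v.
by rewrite -val_eqE /= eq_sym => /negbTE->.
Qed.

Lemma big_pred1_count (V : nmodType) (s : seq nat) (F : nat -> V) k :
  (\sum_(x <- s | x == k) F x = F k *+ count_mem k s)%R.
Proof.
elim: s => [|x s IHs]; first by rewrite big_nil.
by rewrite big_cons IHs /=; case: eqP => [->|_]; rewrite ?mulrS.
Qed.

(** * Square matrices as lists of rows *)

Definition lmatrix := seq (seq nat).

Section ListMatrix.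
Variable d : nat.

Definition lentry (A : lmatrix) i j := nth 0 (nth [::] A i) j.
Definition lmx (f : nat -> nat -> nat) : lmatrix := mkseq (fun i => mkseq (f i) d) d.

Definition lid := lmx (fun i j => i == j).
Definition lzero := lmx (fun _ _ => 0).
Definition ladd A B := lmx (fun i j => lentry A i j + lentry B i j).
Definition lsum (s : seq lmatrix) := foldr ladd lzero s.
Definition lsub A B := lmx (fun i j => lentry A i j - lentry B i j).
Definition lmul A B := lmx (fun i j => sumn (mkseq (fun k => lentry A i k * lentry B k j) d)).
Definition ltrace A := sumn (mkseq (fun i => lentry A i i) d).

Definition mx_of_lmx (A : lmatrix) : 'M[nat]_d := \matrix_(i, j) lentry A i j.

Lemma lentry_lmx f i j : i < d -> j < d -> lentry (lmx f) i j = f i j.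
Proof. by move=> lt_id lt_jd; rewrite /lentry !nth_mkseq. Qed.

Lemma eq_lmx f g : (forall i j, i < d -> j < d -> f i j = g i j) -> lmx f = lmx g.
Proof.
move=> eqfg; apply/eq_in_map => i; rewrite mem_iota => /andP[_ lt_id].
by apply/eq_in_map => j; rewrite mem_iota => /andP[_ lt_jd]; apply: eqfg.
Qed.

Lemma mx_of_lmx_inj f g : mx_of_lmx (lmx f) = mx_of_lmx (lmx g) -> lmx f = lmx g.
Proof.
move/matrixP=> eqfg; apply: eq_lmx => i j lt_id lt_jd.
have := eqfg (Ordinal lt_id) (Ordinal lt_jd).
by rewrite !mxE !lentry_lmx.
Qed.

Local Open Scope ring_scope.

Lemma mx_of_lmx_id : mx_of_lmx lid = 1%:M.
Proof.
apply/matrixP=> i j; rewrite !mxE lentry_lmx //.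
by have -> : (nat_of_ord i == j) = (i == j) by []; case: (i == j).
Qed.

Lemma mx_of_lmx_add A B : mx_of_lmx (ladd A B) = mx_of_lmx A + mx_of_lmx B.
Proof. by apply/matrixP=> i j; rewrite !mxE lentry_lmx. Qed.

Lemma mx_of_lmx_sum s : mx_of_lmx (lsum s) = \sum_(A <- s) mx_of_lmx A.
Proof.
elim: s => [|A s IHs]; last by rewrite big_cons /= mx_of_lmx_add IHs.
by rewrite big_nil; apply/matrixP=> i j; rewrite !mxE lentry_lmx.
Qed.

Lemma mx_of_lmx_mul A B : mx_of_lmx (lmul A B) = mx_of_lmx A *m mx_of_lmx B.
Proof.
apply/matrixP=> i j; rewrite !mxE lentry_lmx // /mkseq sumnE big_map.
rewrite (eq_bigr (fun k : 'I_d => lentry A i k * lentry B k j)) => [|k _]; last by rewrite !mxE.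
by rewrite -(big_mkord xpredT (fun k => lentry A i k * lentry B k j)) /index_iota subn0.
Qed.

Lemma mxtrace_mx_of_lmx A : \tr (mx_of_lmx A) = ltrace A.
Proof.
rewrite /mxtrace (eq_bigr (fun i : 'I_d => lentry A i i)) => [|i _]; last by rewrite mxE.
rewrite -(big_mkord xpredT (fun i => lentry A i i)) /index_iota subn0.
by rewrite /ltrace /mkseq sumnE big_map.
Qed.

End ListMatrix.

(** * Symmetric solutions of Gram equations *)

Definition sqnorm (s : seq nat) := sumn [seq x * x | x <- s].

Fixpoint sqnorm_vecs (L s : nat) : seq (seq nat) :=
  if L is L'.+1 then
    flatten [seq [seq x :: w | w <- sqnorm_vecs L' (s - x * x)] | x <- iota 0 s.+1 & x * x <= s]
  else if s == 0 then [:: [::]] else [::].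

Lemma sqnorm_vecs_complete w : w \in sqnorm_vecs (size w) (sqnorm w).
Proof.
elim: w => [|x w IHw] //.
have -> : sqnorm (x :: w) = x * x + sqnorm w by [].
apply/flatten_mapP; exists x.
  rewrite mem_filter leq_addr mem_iota /= add0n ltnS.
  by apply: leq_trans (leq_addr _ _); case: x => // x; rewrite mulSn leq_addr.
by rewrite addKn map_f.
Qed.

Section GramEnumeration.
Variables (d : nat) (C : lmatrix) (b K : nat).

Definition ldot (u v : seq nat) := sumn (mkseq (fun k => nth 0 u k * nth 0 v k) d).

(* Row [i] of a symmetric solution starts with column [i] of the rows above, so only
   the diagonal entry and the entries to its right are chosen, within the norm budget. *)
Definition next_rows (rows : lmatrix) : seq (seq nat) :=
  let i := size rows in
  let pre := [seq nth 0 r i | r <- rows] in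
  let norm x := lentry C i i + b * x in
  [seq r <- flatten [seq [seq pre ++ x :: w
                            | w <- sqnorm_vecs (d - i.+1) (norm x - (sqnorm pre + x * x))]
                    | x <- iota 0 K.+1 & sqnorm pre + x * x <= norm x]
   | all (fun j => ldot (nth [::] rows j) r == lentry C j i + b * nth 0 r j) (iota 0 i)].

Fixpoint gram_rows k : seq lmatrix :=
  if k is k'.+1 then flatten [seq [seq rcons rows r | r <- next_rows rows] | rows <- gram_rows k']
  else [:: [::]].

Definition gram_solutions := [seq M <- gram_rows d | ltrace d M == K].

Variable f : nat -> nat -> nat.
Hypothesis f_sym : forall i j, i < d -> j < d -> f i j = f j i.
Hypothesis f_gram : forall i k, i < d -> k < d ->
  sumn (mkseq (fun j => f i j * f k j) d) = lentry C i k + b * f i k.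
Hypothesis f_trace : sumn (mkseq (fun i => f i i) d) = K.

Lemma gram_rows_complete k : k <= d -> take k (lmx d f) \in gram_rows k.
Proof.
elim: k => [|k IHk] lt_kd; first by rewrite take0 inE.
have {}IHk := IHk (ltnW lt_kd).
set rows := take k (lmx d f) in IHk *.
have rowsE : rows = mkseq (fun i => mkseq (f i) d) k.
  by rewrite /rows /lmx /mkseq -map_take take_iota; move/ltnW/minn_idPl: lt_kd => ->.
have size_rows : size rows = k by rewrite rowsE size_mkseq.
have rowkE : nth [::] (lmx d f) k = mkseq (f k) d by rewrite nth_mkseq.
rewrite (take_nth [::]) ?size_mkseq //=.
apply/flatten_mapP; exists rows => //; apply: map_f.
have preE : [seq nth 0 r k | r <- rows] = mkseq (f k) k.
  rewrite rowsE /mkseq -map_comp; apply/eq_in_map => i; rewrite mem_iota add0n => /andP[_ lt_ik].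
  by rewrite /= nth_mkseq // f_sym // (ltn_trans lt_ik).
have iotaE : iota 0 d = iota 0 k ++ k :: iota k.+1 (d - k.+1).
  by rewrite -[in LHS](subnKC (ltnW lt_kd)) iotaD add0n -(subnSK lt_kd).
have normE : sqnorm (mkseq (f k) d) = lentry C k k + b * f k k.
  by rewrite -f_gram // /sqnorm /mkseq -map_comp.
set w := mkseq (fun j => f k j) (d - k.+1) in normE.
rewrite rowkE /next_rows size_rows preE mem_filter; apply/andP; split.
  apply/allP => j; rewrite mem_iota add0n => /andP[_ lt_jk].
  have lt_jd : j < d by apply: ltn_trans lt_jk lt_kd.
  rewrite rowsE !nth_mkseq // (f_sym lt_kd lt_jd) /ldot -(f_gram lt_jd lt_kd).
  by apply/eqP/eq_sumn_mkseq => i lt_id; rewrite !nth_mkseq.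
have rowE : mkseq (f k) d = mkseq (f k) k ++ f k k :: [seq f k j | j <- iota k.+1 (d - k.+1)].
  by rewrite /mkseq iotaE map_cat.
rewrite /sqnorm rowE map_cat sumn_cat /= in normE.
apply/flatten_mapP; exists (f k k).
  rewrite mem_filter mem_iota /= ltnS -f_trace (sumn_mkseq_leq (fun i => f i i)) //.
  by rewrite /sqnorm -normE addnA leq_addr.
rewrite rowE; apply: map_f.
have := sqnorm_vecs_complete [seq f k j | j <- iota k.+1 (d - k.+1)].
by rewrite size_map size_iota /sqnorm -normE addnA addKn.
Qed.

Lemma gram_solutions_complete : lmx d f \in gram_solutions.
Proof.
rewrite mem_filter -{2}(take_oversize (n := d) (s := lmx d f)) ?size_mkseq //.
rewrite gram_rows_complete // andbT -f_trace /ltrace; apply/eqP/eq_sumn_mkseq => i lt_id.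
by rewrite lentry_lmx.
Qed.

End GramEnumeration.

Section MatrixToList.
Variable n : nat.
Local Open Scope ring_scope.

Definition lmx_of_mx (M : 'M[nat]_n.+1) : lmatrix :=
  lmx n.+1 (fun i j => M (inord i) (inord j)).

Lemma lentry_lmx_of_mx M (i j : 'I_n.+1) : lentry (lmx_of_mx M) i j = M i j.
Proof. by rewrite lentry_lmx // !inord_val. Qed.

Lemma mx_of_lmx_of_mx M : mx_of_lmx n.+1 (lmx_of_mx M) = M.
Proof. by apply/matrixP=> i j; rewrite mxE lentry_lmx_of_mx. Qed.

Lemma lmx_of_mx1 : lmx_of_mx 1%:M = lid n.+1.
Proof. by apply: mx_of_lmx_inj; rewrite mx_of_lmx_of_mx mx_of_lmx_id. Qed.

Lemma lmx_of_mx_mul A B : lmx_of_mx (A *m B) = lmul n.+1 (lmx_of_mx A) (lmx_of_mx B).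
Proof. by apply: mx_of_lmx_inj; rewrite mx_of_lmx_mul !mx_of_lmx_of_mx. Qed.

Lemma lmx_of_mx_add A B : lmx_of_mx (A + B) = ladd n.+1 (lmx_of_mx A) (lmx_of_mx B).
Proof. by apply: mx_of_lmx_inj; rewrite mx_of_lmx_add !mx_of_lmx_of_mx. Qed.

Lemma lmx_of_mx_addKn A B : lsub n.+1 (lmx_of_mx (A + B)) (lmx_of_mx A) = lmx_of_mx B.
Proof. by apply: eq_lmx => i j lt_in lt_jn; rewrite !lentry_lmx // mxE addKn. Qed.

Lemma lmx_of_mx_sum I (s : seq I) (F : I -> 'M[nat]_n.+1) :
  lmx_of_mx (\sum_(v <- s) F v) = lsum n.+1 [seq lmx_of_mx (F v) | v <- s].
Proof.
elim: s => [|v s IHs]; last by rewrite big_cons lmx_of_mx_add IHs.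
rewrite big_nil; apply: mx_of_lmx_inj; rewrite mx_of_lmx_of_mx.
by apply/matrixP=> i j; rewrite !mxE lentry_lmx.
Qed.

Lemma lmx_of_mx_gram (C M : 'M[nat]_n.+1) b : M^T = M -> M *m M = C + M *+ b ->
  lmx_of_mx M \in gram_solutions n.+1 (lmx_of_mx C) b (\tr M).
Proof.
move=> M_sym M_gram.
have M_symE i j : M i j = M j i by rewrite -[in LHS]M_sym mxE.
apply: gram_solutions_complete.
- by move=> i j _ _.
- move=> i k lt_in lt_kn; rewrite lentry_lmx //.
  apply: (@etrans _ _ ((M *m M) (inord i) (inord k))).
    by rewrite mxE big_ord_sumn; apply: eq_sumn_mkseq => j _; rewrite (M_symE (inord k)).
  by rewrite M_gram !mxE mulmxnE -mulr_natr natn mulrC.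
- by rewrite /mxtrace big_ord_sumn.
Qed.

End MatrixToList.

(** * The fusion rules of D(S_3) *)

(* The rows of [S6], which [vm_compute] cannot read off the locked matrix. *)
Definition S6_table : seq (seq int) :=
  ltac:(let t := eval cbv delta [S6] in S6 in lazymatch t with mxl _ ?l => exact l end).

Definition Srat (i j : nat) : rat := ((nth 0 (nth [::] S6_table i) j)%:~R / 6%:R)%R.

Lemma SmatE (i j : 'I_8) : Smat i j = ratr (Srat i j).
Proof. by rewrite /Smat mxE /S6 /mxl mxE /Srat fmorph_div rmorph_int rmorph_nat. Qed.

Definition fusion_rules : seq (seq (seq nat)) :=
  [:: [:: [:: 0]; [:: 1]; [:: 2]; [:: 3]; [:: 4]; [:: 5]; [:: 6]; [:: 7]];
      [:: [:: 1]; [:: 0]; [:: 2]; [:: 3]; [:: 4]; [:: 5]; [:: 7]; [:: 6]];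
      [:: [:: 2]; [:: 2]; [:: 0; 1; 2]; [:: 4; 5]; [:: 3; 5]; [:: 3; 4]; [:: 6; 7]; [:: 6; 7]];
      [:: [:: 3]; [:: 3]; [:: 4; 5]; [:: 0; 1; 3]; [:: 2; 5]; [:: 2; 4]; [:: 6; 7]; [:: 6; 7]];
      [:: [:: 4]; [:: 4]; [:: 3; 5]; [:: 2; 5]; [:: 0; 1; 4]; [:: 2; 3]; [:: 6; 7]; [:: 6; 7]];
      [:: [:: 5]; [:: 5]; [:: 3; 4]; [:: 2; 4]; [:: 2; 3]; [:: 0; 1; 5]; [:: 6; 7]; [:: 6; 7]];
      [:: [:: 6]; [:: 7]; [:: 6; 7]; [:: 6; 7]; [:: 6; 7]; [:: 6; 7]; [:: 0; 2; 3; 4; 5];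
          [:: 1; 2; 3; 4; 5]];
      [:: [:: 7]; [:: 6]; [:: 6; 7]; [:: 6; 7]; [:: 6; 7]; [:: 6; 7]; [:: 1; 2; 3; 4; 5];
          [:: 0; 2; 3; 4; 5]]].

Definition fusion_list (l m : nat) : seq nat := nth [::] (nth [::] fusion_rules l) m.

Definition verlinde (l m v : nat) : rat :=
  foldr +%R 0%R [seq (Srat l r * Srat m r * Srat v r / Srat 0 r)%R | r <- iota 0 8].

Lemma verlinde_fusion_rules : all (fun l => all (fun m => all (fun v =>
  verlinde l m v == (count_mem v (fusion_list l m))%:R%R) (iota 0 8)) (iota 0 8)) (iota 0 8).
Proof. by vm_compute. Qed.

Lemma fusionE (l m v : 'I_8) : fusion l m v = (count_mem (v : nat) (fusion_list l m))%:R%R.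
Proof.
have /eqP verl :=
  all_iota (all_iota (all_iota verlinde_fusion_rules (ltn_ord l)) (ltn_ord m)) (ltn_ord v).
rewrite -ratr_nat -verl /fusion /verlinde -big_ord_foldr rmorph_sum; apply: eq_bigr => r _.
by rewrite !SmatE conj_Crat ?Crat_rat // [in RHS]fmorph_div [in RHS]rmorphM [in RHS]rmorphM.
Qed.

Lemma fusion_list_lt l m : l < 8 -> m < 8 -> all (gtn 8) (fusion_list l m).
Proof.
have : all (fun l => all (fun m => all (gtn 8) (fusion_list l m)) (iota 0 8)) (iota 0 8) by [].
by move=> fus_lt lt_l8 lt_m8; move/all_iota/(_ l lt_l8)/all_iota/(_ m lt_m8): fus_lt.
Qed.

Lemma fusion_listC l m : l < 8 -> m < 8 -> fusion_list l m = fusion_list m l.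
Proof.
have : all (fun l => all (fun m =>
  fusion_list l m == fusion_list m l) (iota 0 8)) (iota 0 8) by [].
by move=> fusC lt_l8 lt_m8; move/all_iota/(_ l lt_l8)/all_iota/(_ m lt_m8)/eqP: fusC.
Qed.

Lemma fusion_list_square_le l : l < 8 -> all (leq^~ l) (fusion_list l l).
Proof.
have : all (fun l => all (leq^~ l) (fusion_list l l)) (iota 0 8) by [].
by move=> fus_le lt_l8; move/all_iota/(_ l lt_l8): fus_le.
Qed.

Section Nimreps.
Variable n : nat.
Local Open Scope ring_scope.

Lemma natmx_inj : injective (@natmx n).
Proof.
move=> A B /matrixP eqAB; apply/matrixP=> i j.
by have := eqAB i j; rewrite !mxE => /eqP; rewrite eqr_nat => /eqP.
Qed.

Lemma natmx_fusion (G : 'I_8 -> 'M[nat]_n) (l m : 'I_8) :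
  natmx (\sum_(v <- fusion_list l m) G (inord v)) = \sum_(v < 8) fusion l m v *: natmx (G v).
Proof.
apply/matrixP=> i j; rewrite mxE summxE.
rewrite (big_seq_count _ (fusion_list_lt (ltn_ord l) (ltn_ord m))) natr_sum summxE.
apply: eq_bigr => v _; rewrite !mxE fusionE inord_val mulr_natl.
by elim: (count_mem _ _) => // c IHc; rewrite !mulrS natrD IHc.
Qed.

Lemma is_nimrepP (G : 'I_8 -> 'M[nat]_n) : is_nimrep G <->
  [/\ G ord0 = 1%:M, forall l, (G l)^T = G l &
      forall l m, G l *m G m = \sum_(v <- fusion_list l m) G (inord v)].
Proof.
split=> [[G0 Gsym Gmul]|[G0 Gsym Gmul]].
  split=> // [l|l m]; first by rewrite [in RHS]Gsym.
  by apply: natmx_inj; rewrite Gmul natmx_fusion.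
split=> // l m; by rewrite Gmul natmx_fusion.
Qed.

End Nimreps.

Section PermConjugation.
Variables (n : nat) (s : 'S_n).
Local Open Scope ring_scope.

Lemma perm_conj_mxE (M : 'M[nat]_n) i j :
  (perm_mx s *m M *m (perm_mx s)^T) i j = M (s i) (s j).
Proof. by rewrite tr_perm_mx -col_permE -row_permE !mxE. Qed.

Lemma perm_mx_mulT : perm_mx s *m (perm_mx s)^T = 1%:M :> 'M[nat]_n.
Proof. by rewrite tr_perm_mx -perm_mxM mulgV perm_mx1. Qed.

Lemma perm_mx_Tmul : (perm_mx s)^T *m perm_mx s = 1%:M :> 'M[nat]_n.
Proof. by rewrite tr_perm_mx -perm_mxM mulVg perm_mx1. Qed.

Lemma mxtrace_perm_conj (M : 'M[nat]_n) : \tr (perm_mx s *m M *m (perm_mx s)^T) = \tr M.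
Proof. by rewrite mxtrace_mulC mulmxA perm_mx_Tmul mul1mx. Qed.

Lemma is_nimrep_perm_conj (G : 'I_8 -> 'M[nat]_n) :
  is_nimrep G -> is_nimrep (fun l => perm_mx s *m G l *m (perm_mx s)^T).
Proof.
case/is_nimrepP=> G0 Gsym Gmul; apply/is_nimrepP; split.
- by rewrite G0 mulmx1 perm_mx_mulT.
- by move=> l; rewrite !trmx_mul trmxK Gsym mulmxA.
move=> l m; rewrite !mulmxA -(mulmxA _ (perm_mx s)^T) perm_mx_Tmul mulmx1.
by rewrite -(mulmxA (perm_mx s) (G l)) Gmul mulmx_sumr mulmx_suml.
Qed.

End PermConjugation.

(** * Enumerating nimreps *)

Definition label_pairs (k : nat) : seq (nat * nat) :=
  [seq (a, c) | a <- iota 0 k, c <- iota 0 k].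

Definition solving_pair (k : nat) : option (nat * nat) :=
  ohead [seq ac <- label_pairs k | (count_mem k (fusion_list ac.1 ac.2) == 1)
                                   && all (leq^~ k) (fusion_list ac.1 ac.2)].

Section NimrepSearch.
Variables (d : nat) (t : nat -> nat).

(* Only pairs 0 < a <= c involving the newest label are checked (G_0 = 1, the G_l are
   symmetric, and older pairs were checked before); a relation that still involves
   unknown labels is replaced by commutativity. *)
Definition relation_holds (Gs : seq lmatrix) (ac : nat * nat) : bool :=
  let: (a, c) := ac in
  let rule := fusion_list a c in
  if all (gtn (size Gs)) rule then
    lmul d (nth [::] Gs a) (nth [::] Gs c) == lsum d [seq nth [::] Gs v | v <- rule]
  else lmul d (nth [::] Gs a) (nth [::] Gs c) == lmul d (nth [::] Gs c) (nth [::] Gs a).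

Definition relations_hold (Gs : seq lmatrix) : bool :=
  let k := size Gs in
  lazy_all (relation_holds Gs)
    [seq ac <- label_pairs k |
      (0 < ac.1 <= ac.2) && (k.-1 \in [:: ac.1, ac.2 & fusion_list ac.1 ac.2])].

(* G_k is obtained by subtraction when [solving_pair k] finds a product G_a G_c
   containing it once; otherwise it is enumerated from its Gram relation, whose other
   terms are known by [fusion_list_square_le], and the fusion relations just made
   checkable prune the enumeration. *)
Definition label_candidates (Gs : seq lmatrix) : seq lmatrix :=
  let k := size Gs in
  let others a c := lsum d [seq nth [::] Gs v | v <- fusion_list a c & v != k] in
  if solving_pair k is Some (a, c) then
    [:: lsub d (lmul d (nth [::] Gs a) (nth [::] Gs c)) (others a c)]
  else [seq M <- gram_solutions d (others k k) (count_mem k (fusion_list k k)) (t k)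
          | relations_hold (rcons Gs M)].

Fixpoint nimrep_stages (base : seq (seq lmatrix)) k : seq (seq lmatrix) :=
  if k is k'.+1 then
    flatten [seq [seq rcons Gs M | M <- label_candidates Gs] | Gs <- nimrep_stages base k']
  else base.

End NimrepSearch.

Section SearchCompleteness.
Variables (n : nat) (G : 'I_8 -> 'M[nat]_n.+1) (t : nat -> nat).
Hypothesis nimG : is_nimrep G.
Hypothesis trG : forall l : 'I_8, (\tr (G l))%R = t l.

Local Notation g l := (G (inord l)).
Local Notation Gs k := (mkseq (fun l => lmx_of_mx (g l)) k).
Local Open Scope ring_scope.

Lemma nimrep_mulE a c : (a < 8)%N -> (c < 8)%N ->
  g a *m g c = \sum_(v <- fusion_list a c) g v.
Proof.
move=> lt_a8 lt_c8; have [_ _ /(_ (inord a) (inord c))] := (is_nimrepP G).1 nimG.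
by rewrite !inordK.
Qed.

Lemma nimrep_mul_split a c k : (a < 8)%N -> (c < 8)%N ->
  g a *m g c = \sum_(v <- fusion_list a c | v != k) g v + g k *+ count_mem k (fusion_list a c).
Proof.
move=> lt_a8 lt_c8; rewrite nimrep_mulE // (bigID (pred1 k)) /=.
by rewrite big_pred1_count addrC.
Qed.

Lemma lsum_others a c k : all (leq^~ k) (fusion_list a c) ->
  lsum n.+1 [seq nth [::] (Gs k) v | v <- fusion_list a c & v != k] =
  lmx_of_mx (\sum_(v <- fusion_list a c | v != k) g v).
Proof.
move=> /allP le_k; rewrite -big_filter lmx_of_mx_sum; congr (lsum _ _).
apply/eq_in_map => v; rewrite mem_filter => /andP[ne_vk rule_v].
by rewrite nth_mkseq // ltn_neqAle ne_vk le_k.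
Qed.

Lemma relations_hold_nimrep k : (k <= 8)%N -> relations_hold n.+1 (Gs k).
Proof.
move=> le_k8; rewrite /relations_hold lazy_allE; apply/allP=> -[a c].
rewrite mem_filter size_mkseq /= => /andP[_ /allpairsP[[a' c'] /= []]].
rewrite !mem_iota => /andP[_ lt_ak] /andP[_ lt_ck] [eq_a eq_c]; subst a' c'.
have lt_a8 := leq_trans lt_ak le_k8; have lt_c8 := leq_trans lt_ck le_k8.
rewrite /relation_holds size_mkseq !nth_mkseq // -!lmx_of_mx_mul !nimrep_mulE //.
case: ifP => [/allP lt_rule|_]; last by rewrite fusion_listC.
rewrite lmx_of_mx_sum; apply/eqP; congr (lsum _ _); apply/eq_in_map => v rule_v.
by rewrite nth_mkseq //; apply: lt_rule.
Qed.

Lemma label_candidates_nimrep k : (k < 8)%N ->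
  lmx_of_mx (g k) \in label_candidates n.+1 t (Gs k).
Proof.
move=> lt_k8; rewrite /label_candidates size_mkseq.
case Esolve: (solving_pair k) => [[a c]|].
  move/ohead_in: Esolve; rewrite mem_filter /=.
  case/andP=> /andP[/eqP count_k le_k] /allpairsP[[a' c'] /= []].
  rewrite !mem_iota => /andP[_ lt_ak] /andP[_ lt_ck] [eq_a eq_c]; subst a' c'.
  have lt_a8 := ltn_trans lt_ak lt_k8; have lt_c8 := ltn_trans lt_ck lt_k8.
  rewrite !nth_mkseq // -lmx_of_mx_mul (nimrep_mul_split k) // count_k.
  by rewrite lsum_others // lmx_of_mx_addKn inE.
have [_ Gsym _] := (is_nimrepP G).1 nimG.
rewrite mem_filter -mkseqS relations_hold_nimrep //=.
have -> : t k = \tr (g k) by rewrite trG inordK.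
rewrite lsum_others ?fusion_list_square_le //.
exact: lmx_of_mx_gram (Gsym _) (nimrep_mul_split k lt_k8 lt_k8).
Qed.

Lemma nimrep_stages_complete base m k : Gs m \in base -> (m + k <= 8)%N ->
  Gs (m + k) \in nimrep_stages n.+1 t base k.
Proof.
move=> base_m; elim: k => [|k IHk] le_8; first by rewrite addn0.
rewrite addnS mkseqS; apply/flatten_mapP; exists (Gs (m + k)).
  by apply: IHk; rewrite (leq_trans _ le_8) // addnS.
by apply/map_f/label_candidates_nimrep; rewrite -addnS.
Qed.

End SearchCompleteness.

Section Orbits.
Variable d : nat.

Definition lconj_eq (p : seq nat) (A B : lmatrix) : bool :=
  lazy_all (fun i => lazy_all (fun j =>
    lentry A i j == lentry B (nth 0 p i) (nth 0 p j)) (iota 0 d)) (iota 0 d).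

Definition in_orbit_on (ls : seq nat) (perms : seq (seq nat)) (L Gs : seq lmatrix) : bool :=
  lazy_has (fun p => lazy_all (fun l => lconj_eq p (nth [::] Gs l) (nth [::] L l)) ls) perms.

Definition ltraces (L : seq lmatrix) (l : nat) : nat := ltrace d (nth [::] L l).

(* Every candidate for G_1 is conjugate to L_1, so the search may assume G_1 = L_1.
   Large labels are compared first: they reject a wrong permutation soonest. *)
Definition nimreps_in_orbit (L : seq lmatrix) : bool :=
  lazy_all (in_orbit_on [:: 1] (permutations (iota 0 d)) L)
           (nimrep_stages d (ltraces L) [:: [::]] 2) &&
  lazy_all (in_orbit_on (rev (iota 0 8)) (permutations (iota 0 d)) L)
           (nimrep_stages d (ltraces L) [:: [:: lid d; lmx d (lentry (nth [::] L 1))]] 6).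

End Orbits.

Lemma perm_of_seq n (p : seq nat) : p \in permutations (iota 0 n.+1) ->
  exists s : 'S_n.+1, forall i : 'I_n.+1, s i = nth 0 p i :> nat.
Proof.
rewrite mem_permutations => perm_p.
have size_p : size p = n.+1 by rewrite (perm_size perm_p) size_iota.
have lt_p (i : 'I_n.+1) : nth 0 p i < n.+1.
  have : nth 0 p i \in iota 0 n.+1 by rewrite -(perm_mem perm_p) mem_nth ?size_p.
  by rewrite mem_iota.
have inj_p : injective (fun i : 'I_n.+1 => inord (nth 0 p i) : 'I_n.+1).
  move=> i j /(congr1 val) /=; rewrite !inordK // => /eqP.
  by rewrite nth_uniq ?size_p // ?(perm_uniq perm_p) ?iota_uniq // => /eqP /val_inj.
by exists (perm inj_p) => i; rewrite permE inordK.
Qed.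

Lemma in_orbit_onP n ls (L Gs : seq lmatrix) :
  in_orbit_on n.+1 ls (permutations (iota 0 n.+1)) L Gs ->
  exists s : 'S_n.+1, forall l, l \in ls -> forall i j : 'I_n.+1,
    lentry (nth [::] Gs l) i j = lentry (nth [::] L l) (s i) (s j).
Proof.
rewrite /in_orbit_on lazy_hasE => /hasP[p /perm_of_seq[s sE]]; rewrite lazy_allE => /allP conj_p.
exists s => l /conj_p; rewrite /lconj_eq lazy_allE => /all_iota conj_l i j.
move: (conj_l i (ltn_ord i)); rewrite lazy_allE => /all_iota/(_ j (ltn_ord j))/eqP->.
by rewrite !sE.
Qed.

Section Classification.
Variables (n : nat) (L : seq lmatrix) (G : 'I_8 -> 'M[nat]_n.+1).
Hypothesis search : nimreps_in_orbit n.+1 L.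
Hypothesis nimG : is_nimrep G.
Hypothesis trG : forall l, (\tr (G l))%R = ltraces n.+1 L l.

Lemma nimrep_normal_form : exists s : 'S_n.+1,
  let G' l := (perm_mx s *m G l *m (perm_mx s)^T)%R in
  [/\ is_nimrep G', forall l, (\tr (G' l))%R = ltraces n.+1 L l &
      mkseq (fun l => lmx_of_mx (G' (inord l))) 2 =
        [:: lid n.+1; lmx n.+1 (lentry (nth [::] L 1))]].
Proof.
case/andP: search; rewrite lazy_allE => /allP normal _.
have Gs2 :=
  nimrep_stages_complete (base := [:: [::]]) (m := 0) (k := 2) nimG trG (mem_head _ _) isT.
have [s conj1] := in_orbit_onP (normal _ Gs2).
exists s^-1%g; split=> [|l|]; first exact: is_nimrep_perm_conj.
  by rewrite mxtrace_perm_conj trG.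
have [G0 _ _] := (is_nimrepP _).1 (is_nimrep_perm_conj s^-1 nimG).
have inord0 : inord 0 = ord0 :> 'I_8 by apply: val_inj; rewrite /= inordK.
rewrite /mkseq /= inord0 G0 lmx_of_mx1; congr [:: _; _]; apply: eq_lmx => i j lt_i lt_j.
have := conj1 1 (mem_head _ _) (s^-1 (inord i))%g (s^-1 (inord j))%g.
by rewrite nth_mkseq // lentry_lmx_of_mx !permKV !inordK // => <-; rewrite perm_conj_mxE.
Qed.

Lemma nimrep_conj_of_search :
  exists s : 'S_n.+1, forall l i j, G l i j = mx_of_lmx n.+1 (nth [::] L l) (s i) (s j).
Proof.
have [s1 [nimG' trG' prefixG']] := nimrep_normal_form.
case/andP: search => _; rewrite lazy_allE => /allP orbits.
have := nimrep_stages_complete (base := [:: _]) (m := 2) (k := 6) nimG' trG' (mem_head _ _) isT.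
rewrite prefixG' => Gs8.
have [s2 conj2] := in_orbit_onP (orbits _ Gs8).
exists (s1^-1 * s2)%g => l i j; rewrite mxE !permM.
have := conj2 l _ (s1^-1 i)%g (s1^-1 j)%g; rewrite mem_rev mem_iota ltn_ord => /(_ isT).
by rewrite nth_mkseq // inord_val lentry_lmx_of_mx perm_conj_mxE !permKV => ->.
Qed.

End Classification.

(** * Certificates of matching *)

Section Certificate.
Variable n : nat.
Local Notation d := n.+1.

Definition lsym (A : lmatrix) : bool :=
  all (fun i => all (fun j => lentry A i j == lentry A j i) (iota 0 d)) (iota 0 d).

Definition lnimrep (L : seq lmatrix) : bool :=
  [&& nth [::] L 0 == lid d, all (fun l => lsym (nth [::] L l)) (iota 0 8) &
      all (fun l => all (fun m => lmul d (nth [::] L l) (nth [::] L m) ==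
        lsum d [seq nth [::] L v | v <- fusion_list l m]) (iota 0 8)) (iota 0 8)].

Definition nimrep_of (L : seq lmatrix) (l : 'I_8) : 'M[nat]_d := mx_of_lmx d (nth [::] L l).

Lemma is_nimrep_of L : lnimrep L -> is_nimrep (nimrep_of L).
Proof.
case/and3P=> /eqP L0 /all_iota L_sym /all_iota L_mul; apply/is_nimrepP; split.
- by rewrite /nimrep_of L0 mx_of_lmx_id.
- move=> l; apply/matrixP=> i j; rewrite !mxE.
  by have /all_iota/(_ j (ltn_ord j))/all_iota/(_ i (ltn_ord i))/eqP := L_sym l (ltn_ord l).
- move=> l m; have /all_iota/(_ m (ltn_ord m))/eqP := L_mul l (ltn_ord l).
  rewrite /nimrep_of -mx_of_lmx_mul => ->; rewrite mx_of_lmx_sum big_map.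
  apply: eq_big_seq => v /(allP (fusion_list_lt (ltn_ord l) (ltn_ord m))) lt_v8.
  by rewrite inordK.
Qed.

Variables (W : seq (seq int)) (e : seq nat).

Definition Wrat i j : rat := ((nth 0 (nth [::] W i) j)%:~R)%R.
Definition wnorm i : rat := foldr +%R 0%R [seq (Wrat i j ^+ 2)%R | j <- iota 0 d].
Definition eigval (l i : nat) : rat := (Srat l (nth 0 e i) / Srat 0 (nth 0 e i))%R.

Definition eigenbasis (L : seq lmatrix) : bool :=
  [&& all (fun i => wnorm i != 0%R) (iota 0 d),
      all (fun i => all (fun k => (i == k) ||
        (foldr +%R 0%R [seq (Wrat i j * Wrat k j)%R | j <- iota 0 d] == 0%R))
        (iota 0 d)) (iota 0 d) &
      all (fun l => all (fun j => all (fun k =>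
        foldr +%R 0%R [seq (Wrat i j * Wrat i k * eigval l i / wnorm i)%R | i <- iota 0 d] ==
        (lentry (nth [::] L l) j k)%:R%R) (iota 0 d)) (iota 0 d)) (iota 0 8)].

Definition exponents (zl : seq (seq nat)) : bool :=
  [&& size e == d, all (gtn 8) e &
      all (fun mu => count_mem mu e == nth 0 (nth [::] zl mu) mu) (iota 0 8)].

Local Open Scope ring_scope.

Definition Umx : 'M[algC]_d := \matrix_(i, j) (ratr (Wrat i j) / sqrtC (ratr (wnorm i))).
Definition emap (i : 'I_d) : 'I_8 := inord (nth 0%N e i).

Lemma wnorm_ge0 i : 0 <= wnorm i.
Proof. by rewrite /wnorm; elim: (iota 0 d) => //= j s IHs; rewrite addr_ge0 ?sqr_ge0. Qed.

Lemma sqrt_wnorm_real i : sqrtC (ratr (wnorm i) : algC) \is Num.real.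
Proof. by apply: sqrtC_real; rewrite ler0q wnorm_ge0. Qed.

Lemma sqrt_wnormK i : sqrtC (ratr (wnorm i) : algC) * sqrtC (ratr (wnorm i)) = ratr (wnorm i).
Proof. by rewrite -expr2 sqrtCK. Qed.

Lemma conj_Umx_entry (q : rat) i :
  ((ratr q : algC) / sqrtC (ratr (wnorm i)))^* = ratr q / sqrtC (ratr (wnorm i)).
Proof. by rewrite conj_Creal // rpred_div ?sqrt_wnorm_real // Creal_Crat ?Crat_rat. Qed.

Lemma Umx_unitary L : eigenbasis L -> Umx *m ctrans Umx = 1%:M.
Proof.
case/and3P=> /all_iota W_nz /all_iota W_orth _; apply/matrixP=> i k; rewrite !mxE.
under eq_bigr do rewrite !mxE conj_Umx_entry mulrACA -invfM -rmorphM.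
rewrite -mulr_suml -rmorph_sum (big_ord_foldr _ (fun j => Wrat i j * Wrat k j)).
have [<-|ne_ik] := eqVneq i k.
  have -> : [seq Wrat i j * Wrat i j | j <- iota 0 d] = [seq Wrat i j ^+ 2 | j <- iota 0 d].
    by apply: eq_map => j; rewrite expr2.
  by rewrite sqrt_wnormK divff // fmorph_eq0 (W_nz i).
have /all_iota/(_ k (ltn_ord k)) := W_orth i (ltn_ord i).
have /negbTE-> : (i : nat) != k := ne_ik.
by move=> /eqP->; rewrite rmorph0 mul0r.
Qed.

Lemma card_emap zl (mu : 'I_8) : exponents zl ->
  #|[set i | emap i == mu]| = count_mem (mu : nat) e.
Proof.
case/and3P=> /eqP size_e /allP lt_e _.
rewrite -sum1_card (eq_bigl (fun i : 'I_d => nth 0%N e i == mu)) => [|i]; last first.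
  have lt_ei : (nth 0 e i < 8)%N by apply: lt_e; rewrite mem_nth // size_e.
  by rewrite inE -val_eqE /= inordK.
rewrite -(big_mkord (fun i => nth 0%N e i == mu) (fun _ => 1%N)) sum1_count.
by rewrite -[in RHS](mkseq_nth 0%N e) size_e /mkseq count_map.
Qed.

Lemma Umx_entry_product (a b c : rat) i : wnorm i != 0 ->
  ratr a / sqrtC (ratr (wnorm i)) * ratr c * (ratr b / sqrtC (ratr (wnorm i))) =
  ratr (a * b * c / wnorm i) :> algC.
Proof.
move=> nz_i; have := sqrt_wnormK i; set s := sqrtC _ => sK.
have nz_s : s != 0 by rewrite /s sqrtC_eq0 fmorph_eq0.
transitivity ((ratr a : algC) * ratr b * ratr c / (s * s)); first by field.
by rewrite sK !rmorphM fmorphV.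
Qed.

Lemma Umx_diagonalizes zl L (l : 'I_8) : eigenbasis L -> exponents zl ->
  natmx (nimrep_of L l) =
  ctrans Umx *m diag_mx (\row_i (Smat l (emap i) / Smat ord0 (emap i))) *m Umx.
Proof.
case/and3P=> /all_iota W_nz _ /all_iota W_diag /and3P[/eqP size_e /allP lt_e _].
apply/matrixP=> j k; rewrite mul_mx_diag !mxE.
rewrite (eq_bigr (fun i : 'I_d => ratr (Wrat i j * Wrat i k * eigval l i / wnorm i))) => [|i _].
  rewrite -rmorph_sum (big_ord_foldr _ (fun i => Wrat i j * Wrat i k * eigval l i / wnorm i)).
  have /all_iota/(_ j (ltn_ord j))/all_iota/(_ k (ltn_ord k))/eqP-> := W_diag l (ltn_ord l).
  by rewrite rmorph_nat.
have lt_ei : (nth 0 e i < 8)%N by apply: lt_e; rewrite mem_nth // size_e.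
(* Locking [Smat] keeps [mxE] from expanding the S-matrix itself. *)
rewrite (lock Smat) !mxE -lock conj_Umx_entry !SmatE /emap inordK //.
rewrite -fmorph_div Umx_entry_product //.
exact: W_nz.
Qed.

End Certificate.

Lemma matches_of_certificate n zl (L : seq lmatrix) W e :
  lnimrep n L -> eigenbasis n W e L -> exponents n e zl -> matches (mxl 0%N zl) (nimrep_of n L).
Proof.
move=> nimL eigL /[dup] expZ /and3P[/eqP size_e lt_e /all_iota Zdiag]; split.
- rewrite -size_e /mxtrace.
  rewrite (eq_bigr (fun mu : 'I_8 => count_mem (mu : nat) e)) => [|mu _]; last first.
    by rewrite /mxl mxE; apply/esym/eqP/Zdiag.
  have := big_seq_count (fun _ => 1%N) lt_e; rewrite sum1_size => ->.
  by apply: eq_bigr => mu _; rewrite natn.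
- exact: is_nimrep_of.
exists (@Umx n W), (@emap n e); split.
- exact: Umx_unitary eigL.
- by move=> mu; rewrite (card_emap _ expZ) /mxl mxE; apply/eqP/Zdiag.
- by move=> l; apply: Umx_diagonalizes eigL expZ.
Qed.

Section Matching.
Local Open Scope ring_scope.

Lemma matches_trace Z n (G : 'I_8 -> 'M[nat]_n) : matches Z G -> forall l,
  (\tr (G l))%:R = \sum_mu (Z mu mu)%:R * (Smat l mu / Smat ord0 mu) :> algC.
Proof.
case=> _ _ [U [e [U_unitary e_card G_diag]]] l.
have := congr1 mxtrace (G_diag l).
rewrite mxtrace_mulC mulmxA U_unitary mul1mx mxtrace_diag.
have -> : \tr (natmx (G l)) = (\tr (G l))%:R.
  by rewrite /mxtrace natr_sum; apply: eq_bigr => i _; rewrite mxE.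
move=> ->; under eq_bigr do rewrite mxE.
rewrite (partition_big e xpredT) //=; apply: eq_bigr => mu _.
rewrite (eq_bigr (fun _ => Smat l mu / Smat ord0 mu)) => [|i /eqP-> //].
rewrite sumr_const mulr_natl -e_card cardsE.
by congr (_ *+ _); apply: eq_card.
Qed.

End Matching.

Lemma matching_nimrep_unique n zl (L : seq lmatrix) W e :
  lnimrep n L -> eigenbasis n W e L -> exponents n e zl -> nimreps_in_orbit n.+1 L ->
  (exists m (G : 'I_8 -> 'M[nat]_m), matches (mxl 0 zl) G) /\
  (forall m (G1 G2 : 'I_8 -> 'M[nat]_m),
      matches (mxl 0 zl) G1 -> matches (mxl 0 zl) G2 -> nimrep_equiv G1 G2).
Proof.
move=> nimL eigL expZ search; have matchL := matches_of_certificate nimL eigL expZ.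
split=> [|m G1 G2 match1 match2]; first by exists n.+1, (nimrep_of n L).
have eq_m : m = n.+1.
  by case: match1 => [dim1 _ _]; case: matchL => [dimL _ _]; rewrite dim1 dimL.
subst m; have conjL G : matches (mxl 0 zl) G ->
    exists s : 'S_n.+1, forall l i j, G l i j = nimrep_of n L l (s i) (s j).
  move=> matchG; apply: nimrep_conj_of_search search _ _; first by case: matchG.
  move=> l; rewrite /ltraces -mxtrace_mx_of_lmx; apply/eqP; rewrite -(eqr_nat algC).
  by rewrite (matches_trace matchG) (matches_trace matchL).
have [s1 E1] := conjL G1 match1; have [s2 E2] := conjL G2 match2.
exists (s2 * s1^-1)%g => l; apply/matrixP=> i j.
by rewrite perm_conj_mxE E1 E2 !permM !permKV.
Qed.

(* For each invariant: a nimrep, the rows of an orthogonal eigenbasis of it (up to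
   normalisation) and the exponent of each row. *)
Definition nimrep_p22 : seq lmatrix :=
  [:: [:: [:: 1; 0; 0; 0; 0; 0]; [:: 0; 1; 0; 0; 0; 0]; [:: 0; 0; 1; 0; 0; 0];
          [:: 0; 0; 0; 1; 0; 0]; [:: 0; 0; 0; 0; 1; 0]; [:: 0; 0; 0; 0; 0; 1]];
      [:: [:: 0; 0; 0; 0; 0; 1]; [:: 0; 0; 0; 0; 1; 0]; [:: 0; 0; 1; 0; 0; 0];
          [:: 0; 0; 0; 1; 0; 0]; [:: 0; 1; 0; 0; 0; 0]; [:: 1; 0; 0; 0; 0; 0]];
      [:: [:: 1; 0; 0; 0; 0; 1]; [:: 0; 1; 0; 0; 1; 0]; [:: 0; 0; 2; 0; 0; 0];
          [:: 0; 0; 0; 2; 0; 0]; [:: 0; 1; 0; 0; 1; 0]; [:: 1; 0; 0; 0; 0; 1]];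
      [:: [:: 0; 0; 0; 1; 0; 0]; [:: 0; 0; 1; 0; 0; 0]; [:: 0; 1; 1; 0; 1; 0];
          [:: 1; 0; 0; 1; 0; 1]; [:: 0; 0; 1; 0; 0; 0]; [:: 0; 0; 0; 1; 0; 0]];
      [:: [:: 0; 0; 0; 1; 0; 0]; [:: 0; 0; 1; 0; 0; 0]; [:: 0; 1; 1; 0; 1; 0];
          [:: 1; 0; 0; 1; 0; 1]; [:: 0; 0; 1; 0; 0; 0]; [:: 0; 0; 0; 1; 0; 0]];
      [:: [:: 0; 0; 0; 1; 0; 0]; [:: 0; 0; 1; 0; 0; 0]; [:: 0; 1; 1; 0; 1; 0];
          [:: 1; 0; 0; 1; 0; 1]; [:: 0; 0; 1; 0; 0; 0]; [:: 0; 0; 0; 1; 0; 0]];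
      [:: [:: 0; 0; 1; 0; 1; 0]; [:: 0; 0; 0; 1; 0; 1]; [:: 1; 0; 0; 2; 0; 1];
          [:: 0; 1; 2; 0; 1; 0]; [:: 1; 0; 0; 1; 0; 0]; [:: 0; 1; 1; 0; 0; 0]];
      [:: [:: 0; 1; 1; 0; 0; 0]; [:: 1; 0; 0; 1; 0; 0]; [:: 1; 0; 0; 2; 0; 1];
          [:: 0; 1; 2; 0; 1; 0]; [:: 0; 0; 0; 1; 0; 1]; [:: 0; 0; 1; 0; 1; 0]]].

Definition eigvecs_p22 : seq (seq int) :=
  [:: [:: 1; 1; 2; 2; 1; 1];
      [:: 1; -1; -2; 2; -1; 1];
      [:: 0; 1; -1; 0; 1; 0];
      [:: 1; 0; 0; -1; 0; 1];
      [:: -1; 1; 0; 0; -1; 1];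
      [:: -1; -1; 0; 0; 1; 1]]%R.

Definition exps_p22 : seq nat := [:: 0; 1; 2; 2; 6; 7].

Definition nimrep_2 : seq lmatrix :=
  [:: [:: [:: 1; 0; 0; 0; 0; 0]; [:: 0; 1; 0; 0; 0; 0]; [:: 0; 0; 1; 0; 0; 0];
          [:: 0; 0; 0; 1; 0; 0]; [:: 0; 0; 0; 0; 1; 0]; [:: 0; 0; 0; 0; 0; 1]];
      [:: [:: 0; 0; 0; 0; 0; 1]; [:: 0; 0; 0; 0; 1; 0]; [:: 0; 0; 1; 0; 0; 0];
          [:: 0; 0; 0; 1; 0; 0]; [:: 0; 1; 0; 0; 0; 0]; [:: 1; 0; 0; 0; 0; 0]];
      [:: [:: 0; 0; 0; 1; 0; 0]; [:: 0; 0; 1; 0; 0; 0]; [:: 0; 1; 1; 0; 1; 0];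
          [:: 1; 0; 0; 1; 0; 1]; [:: 0; 0; 1; 0; 0; 0]; [:: 0; 0; 0; 1; 0; 0]];
      [:: [:: 0; 0; 0; 1; 0; 0]; [:: 0; 0; 1; 0; 0; 0]; [:: 0; 1; 1; 0; 1; 0];
          [:: 1; 0; 0; 1; 0; 1]; [:: 0; 0; 1; 0; 0; 0]; [:: 0; 0; 0; 1; 0; 0]];
      [:: [:: 0; 0; 0; 1; 0; 0]; [:: 0; 1; 0; 0; 1; 0]; [:: 0; 0; 2; 0; 0; 0];
          [:: 1; 0; 0; 1; 0; 1]; [:: 0; 1; 0; 0; 1; 0]; [:: 0; 0; 0; 1; 0; 0]];
      [:: [:: 1; 0; 0; 0; 0; 1]; [:: 0; 0; 1; 0; 0; 0]; [:: 0; 1; 1; 0; 1; 0];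
          [:: 0; 0; 0; 2; 0; 0]; [:: 0; 0; 1; 0; 0; 0]; [:: 1; 0; 0; 0; 0; 1]];
      [:: [:: 0; 0; 1; 0; 1; 0]; [:: 0; 0; 0; 1; 0; 1]; [:: 1; 0; 0; 2; 0; 1];
          [:: 0; 1; 2; 0; 1; 0]; [:: 1; 0; 0; 1; 0; 0]; [:: 0; 1; 1; 0; 0; 0]];
      [:: [:: 0; 1; 1; 0; 0; 0]; [:: 1; 0; 0; 1; 0; 0]; [:: 1; 0; 0; 2; 0; 1];
          [:: 0; 1; 2; 0; 1; 0]; [:: 0; 0; 0; 1; 0; 1]; [:: 0; 0; 1; 0; 1; 0]]].

Definition eigvecs_2 : seq (seq int) :=
  [:: [:: 1; 1; 2; 2; 1; 1];
      [:: 1; -1; -2; 2; -1; 1];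
      [:: 1; 0; 0; -1; 0; 1];
      [:: 0; 1; -1; 0; 1; 0];
      [:: -1; 1; 0; 0; -1; 1];
      [:: -1; -1; 0; 0; 1; 1]]%R.

Definition exps_2 : seq nat := [:: 0; 1; 4; 5; 6; 7].

Definition nimrep_4 : seq lmatrix :=
  [:: [:: [:: 1; 0; 0; 0; 0; 0]; [:: 0; 1; 0; 0; 0; 0]; [:: 0; 0; 1; 0; 0; 0];
          [:: 0; 0; 0; 1; 0; 0]; [:: 0; 0; 0; 0; 1; 0]; [:: 0; 0; 0; 0; 0; 1]];
      [:: [:: 1; 0; 0; 0; 0; 0]; [:: 0; 1; 0; 0; 0; 0]; [:: 0; 0; 1; 0; 0; 0];
          [:: 0; 0; 0; 1; 0; 0]; [:: 0; 0; 0; 0; 1; 0]; [:: 0; 0; 0; 0; 0; 1]];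
      [:: [:: 0; 0; 0; 0; 1; 1]; [:: 0; 2; 0; 0; 0; 0]; [:: 0; 0; 2; 0; 0; 0];
          [:: 0; 0; 0; 2; 0; 0]; [:: 1; 0; 0; 0; 0; 1]; [:: 1; 0; 0; 0; 1; 0]];
      [:: [:: 2; 0; 0; 0; 0; 0]; [:: 0; 0; 1; 1; 0; 0]; [:: 0; 1; 0; 1; 0; 0];
          [:: 0; 1; 1; 0; 0; 0]; [:: 0; 0; 0; 0; 2; 0]; [:: 0; 0; 0; 0; 0; 2]];
      [:: [:: 0; 0; 0; 0; 1; 1]; [:: 0; 0; 1; 1; 0; 0]; [:: 0; 1; 0; 1; 0; 0];
          [:: 0; 1; 1; 0; 0; 0]; [:: 1; 0; 0; 0; 0; 1]; [:: 1; 0; 0; 0; 1; 0]];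
      [:: [:: 0; 0; 0; 0; 1; 1]; [:: 0; 0; 1; 1; 0; 0]; [:: 0; 1; 0; 1; 0; 0];
          [:: 0; 1; 1; 0; 0; 0]; [:: 1; 0; 0; 0; 0; 1]; [:: 1; 0; 0; 0; 1; 0]];
      [:: [:: 0; 1; 1; 1; 0; 0]; [:: 1; 0; 0; 0; 1; 1]; [:: 1; 0; 0; 0; 1; 1];
          [:: 1; 0; 0; 0; 1; 1]; [:: 0; 1; 1; 1; 0; 0]; [:: 0; 1; 1; 1; 0; 0]];
      [:: [:: 0; 1; 1; 1; 0; 0]; [:: 1; 0; 0; 0; 1; 1]; [:: 1; 0; 0; 0; 1; 1];
          [:: 1; 0; 0; 0; 1; 1]; [:: 0; 1; 1; 1; 0; 0]; [:: 0; 1; 1; 1; 0; 0]]].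

Definition eigvecs_4 : seq (seq int) :=
  [:: [:: 1; 1; 1; 1; 1; 1];
      [:: 1; -1; -1; -1; 1; 1];
      [:: 0; -1; 1; 0; 0; 0];
      [:: 0; -1; -1; 2; 0; 0];
      [:: -1; 0; 0; 0; 1; 0];
      [:: -1; 0; 0; 0; -1; 2]]%R.

Definition exps_4 : seq nat := [:: 0; 1; 2; 2; 3; 3].

Definition nimrep_7 : seq lmatrix :=
  [:: [:: [:: 1; 0; 0; 0; 0; 0]; [:: 0; 1; 0; 0; 0; 0]; [:: 0; 0; 1; 0; 0; 0];
          [:: 0; 0; 0; 1; 0; 0]; [:: 0; 0; 0; 0; 1; 0]; [:: 0; 0; 0; 0; 0; 1]];
      [:: [:: 1; 0; 0; 0; 0; 0]; [:: 0; 1; 0; 0; 0; 0]; [:: 0; 0; 1; 0; 0; 0];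
          [:: 0; 0; 0; 1; 0; 0]; [:: 0; 0; 0; 0; 1; 0]; [:: 0; 0; 0; 0; 0; 1]];
      [:: [:: 0; 0; 0; 0; 1; 1]; [:: 0; 0; 1; 1; 0; 0]; [:: 0; 1; 0; 1; 0; 0];
          [:: 0; 1; 1; 0; 0; 0]; [:: 1; 0; 0; 0; 0; 1]; [:: 1; 0; 0; 0; 1; 0]];
      [:: [:: 0; 0; 0; 0; 1; 1]; [:: 0; 0; 1; 1; 0; 0]; [:: 0; 1; 0; 1; 0; 0];
          [:: 0; 1; 1; 0; 0; 0]; [:: 1; 0; 0; 0; 0; 1]; [:: 1; 0; 0; 0; 1; 0]];
      [:: [:: 0; 0; 0; 0; 1; 1]; [:: 0; 2; 0; 0; 0; 0]; [:: 0; 0; 2; 0; 0; 0];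
          [:: 0; 0; 0; 2; 0; 0]; [:: 1; 0; 0; 0; 0; 1]; [:: 1; 0; 0; 0; 1; 0]];
      [:: [:: 2; 0; 0; 0; 0; 0]; [:: 0; 0; 1; 1; 0; 0]; [:: 0; 1; 0; 1; 0; 0];
          [:: 0; 1; 1; 0; 0; 0]; [:: 0; 0; 0; 0; 2; 0]; [:: 0; 0; 0; 0; 0; 2]];
      [:: [:: 0; 1; 1; 1; 0; 0]; [:: 1; 0; 0; 0; 1; 1]; [:: 1; 0; 0; 0; 1; 1];
          [:: 1; 0; 0; 0; 1; 1]; [:: 0; 1; 1; 1; 0; 0]; [:: 0; 1; 1; 1; 0; 0]];
      [:: [:: 0; 1; 1; 1; 0; 0]; [:: 1; 0; 0; 0; 1; 1]; [:: 1; 0; 0; 0; 1; 1];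
          [:: 1; 0; 0; 0; 1; 1]; [:: 0; 1; 1; 1; 0; 0]; [:: 0; 1; 1; 1; 0; 0]]].

Definition eigvecs_7 : seq (seq int) :=
  [:: [:: 1; 1; 1; 1; 1; 1];
      [:: 1; -1; -1; -1; 1; 1];
      [:: -1; 0; 0; 0; 1; 0];
      [:: -1; 0; 0; 0; -1; 2];
      [:: 0; -1; 1; 0; 0; 0];
      [:: 0; -1; -1; 2; 0; 0]]%R.

Definition exps_7 : seq nat := [:: 0; 1; 4; 4; 5; 5].

Definition nimrep_22 : seq lmatrix :=
  [:: [:: [:: 1; 0; 0; 0; 0; 0]; [:: 0; 1; 0; 0; 0; 0]; [:: 0; 0; 1; 0; 0; 0];
          [:: 0; 0; 0; 1; 0; 0]; [:: 0; 0; 0; 0; 1; 0]; [:: 0; 0; 0; 0; 0; 1]];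
      [:: [:: 1; 0; 0; 0; 0; 0]; [:: 0; 1; 0; 0; 0; 0]; [:: 0; 0; 1; 0; 0; 0];
          [:: 0; 0; 0; 1; 0; 0]; [:: 0; 0; 0; 0; 1; 0]; [:: 0; 0; 0; 0; 0; 1]];
      [:: [:: 2; 0; 0; 0; 0; 0]; [:: 0; 2; 0; 0; 0; 0]; [:: 0; 0; 2; 0; 0; 0];
          [:: 0; 0; 0; 2; 0; 0]; [:: 0; 0; 0; 0; 2; 0]; [:: 0; 0; 0; 0; 0; 2]];
      [:: [:: 0; 0; 0; 0; 1; 1]; [:: 0; 0; 1; 1; 0; 0]; [:: 0; 1; 0; 1; 0; 0];
          [:: 0; 1; 1; 0; 0; 0]; [:: 1; 0; 0; 0; 0; 1]; [:: 1; 0; 0; 0; 1; 0]];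
      [:: [:: 0; 0; 0; 0; 1; 1]; [:: 0; 0; 1; 1; 0; 0]; [:: 0; 1; 0; 1; 0; 0];
          [:: 0; 1; 1; 0; 0; 0]; [:: 1; 0; 0; 0; 0; 1]; [:: 1; 0; 0; 0; 1; 0]];
      [:: [:: 0; 0; 0; 0; 1; 1]; [:: 0; 0; 1; 1; 0; 0]; [:: 0; 1; 0; 1; 0; 0];
          [:: 0; 1; 1; 0; 0; 0]; [:: 1; 0; 0; 0; 0; 1]; [:: 1; 0; 0; 0; 1; 0]];
      [:: [:: 0; 1; 1; 1; 0; 0]; [:: 1; 0; 0; 0; 1; 1]; [:: 1; 0; 0; 0; 1; 1];
          [:: 1; 0; 0; 0; 1; 1]; [:: 0; 1; 1; 1; 0; 0]; [:: 0; 1; 1; 1; 0; 0]];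
      [:: [:: 0; 1; 1; 1; 0; 0]; [:: 1; 0; 0; 0; 1; 1]; [:: 1; 0; 0; 0; 1; 1];
          [:: 1; 0; 0; 0; 1; 1]; [:: 0; 1; 1; 1; 0; 0]; [:: 0; 1; 1; 1; 0; 0]]].

Definition eigvecs_22 : seq (seq int) :=
  [:: [:: 1; 1; 1; 1; 1; 1];
      [:: 1; -1; -1; -1; 1; 1];
      [:: 0; -1; 1; 0; 0; 0];
      [:: 0; -1; -1; 2; 0; 0];
      [:: -1; 0; 0; 0; 1; 0];
      [:: -1; 0; 0; 0; -1; 2]]%R.

Definition exps_22 : seq nat := [:: 0; 1; 2; 2; 2; 2].

Definition nimrep_33 : seq lmatrix :=
  [:: [:: [:: 1; 0; 0; 0; 0; 0]; [:: 0; 1; 0; 0; 0; 0]; [:: 0; 0; 1; 0; 0; 0];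
          [:: 0; 0; 0; 1; 0; 0]; [:: 0; 0; 0; 0; 1; 0]; [:: 0; 0; 0; 0; 0; 1]];
      [:: [:: 1; 0; 0; 0; 0; 0]; [:: 0; 1; 0; 0; 0; 0]; [:: 0; 0; 1; 0; 0; 0];
          [:: 0; 0; 0; 1; 0; 0]; [:: 0; 0; 0; 0; 1; 0]; [:: 0; 0; 0; 0; 0; 1]];
      [:: [:: 0; 0; 0; 0; 1; 1]; [:: 0; 0; 1; 1; 0; 0]; [:: 0; 1; 0; 1; 0; 0];
          [:: 0; 1; 1; 0; 0; 0]; [:: 1; 0; 0; 0; 0; 1]; [:: 1; 0; 0; 0; 1; 0]];
      [:: [:: 2; 0; 0; 0; 0; 0]; [:: 0; 2; 0; 0; 0; 0]; [:: 0; 0; 2; 0; 0; 0];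
          [:: 0; 0; 0; 2; 0; 0]; [:: 0; 0; 0; 0; 2; 0]; [:: 0; 0; 0; 0; 0; 2]];
      [:: [:: 0; 0; 0; 0; 1; 1]; [:: 0; 0; 1; 1; 0; 0]; [:: 0; 1; 0; 1; 0; 0];
          [:: 0; 1; 1; 0; 0; 0]; [:: 1; 0; 0; 0; 0; 1]; [:: 1; 0; 0; 0; 1; 0]];
      [:: [:: 0; 0; 0; 0; 1; 1]; [:: 0; 0; 1; 1; 0; 0]; [:: 0; 1; 0; 1; 0; 0];
          [:: 0; 1; 1; 0; 0; 0]; [:: 1; 0; 0; 0; 0; 1]; [:: 1; 0; 0; 0; 1; 0]];
      [:: [:: 0; 1; 1; 1; 0; 0]; [:: 1; 0; 0; 0; 1; 1]; [:: 1; 0; 0; 0; 1; 1];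
          [:: 1; 0; 0; 0; 1; 1]; [:: 0; 1; 1; 1; 0; 0]; [:: 0; 1; 1; 1; 0; 0]];
      [:: [:: 0; 1; 1; 1; 0; 0]; [:: 1; 0; 0; 0; 1; 1]; [:: 1; 0; 0; 0; 1; 1];
          [:: 1; 0; 0; 0; 1; 1]; [:: 0; 1; 1; 1; 0; 0]; [:: 0; 1; 1; 1; 0; 0]]].

Definition eigvecs_33 : seq (seq int) :=
  [:: [:: 1; 1; 1; 1; 1; 1];
      [:: 1; -1; -1; -1; 1; 1];
      [:: 0; -1; 1; 0; 0; 0];
      [:: 0; -1; -1; 2; 0; 0];
      [:: -1; 0; 0; 0; 1; 0];
      [:: -1; 0; 0; 0; -1; 2]]%R.

Definition exps_33 : seq nat := [:: 0; 1; 3; 3; 3; 3].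

Definition nimrep_p33 : seq lmatrix :=
  [:: [:: [:: 1; 0; 0; 0; 0; 0]; [:: 0; 1; 0; 0; 0; 0]; [:: 0; 0; 1; 0; 0; 0];
          [:: 0; 0; 0; 1; 0; 0]; [:: 0; 0; 0; 0; 1; 0]; [:: 0; 0; 0; 0; 0; 1]];
      [:: [:: 0; 0; 0; 0; 0; 1]; [:: 0; 0; 0; 0; 1; 0]; [:: 0; 0; 1; 0; 0; 0];
          [:: 0; 0; 0; 1; 0; 0]; [:: 0; 1; 0; 0; 0; 0]; [:: 1; 0; 0; 0; 0; 0]];
      [:: [:: 0; 0; 0; 1; 0; 0]; [:: 0; 0; 1; 0; 0; 0]; [:: 0; 1; 1; 0; 1; 0];
          [:: 1; 0; 0; 1; 0; 1]; [:: 0; 0; 1; 0; 0; 0]; [:: 0; 0; 0; 1; 0; 0]];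
      [:: [:: 1; 0; 0; 0; 0; 1]; [:: 0; 1; 0; 0; 1; 0]; [:: 0; 0; 2; 0; 0; 0];
          [:: 0; 0; 0; 2; 0; 0]; [:: 0; 1; 0; 0; 1; 0]; [:: 1; 0; 0; 0; 0; 1]];
      [:: [:: 0; 0; 0; 1; 0; 0]; [:: 0; 0; 1; 0; 0; 0]; [:: 0; 1; 1; 0; 1; 0];
          [:: 1; 0; 0; 1; 0; 1]; [:: 0; 0; 1; 0; 0; 0]; [:: 0; 0; 0; 1; 0; 0]];
      [:: [:: 0; 0; 0; 1; 0; 0]; [:: 0; 0; 1; 0; 0; 0]; [:: 0; 1; 1; 0; 1; 0];
          [:: 1; 0; 0; 1; 0; 1]; [:: 0; 0; 1; 0; 0; 0]; [:: 0; 0; 0; 1; 0; 0]];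
      [:: [:: 0; 0; 1; 0; 1; 0]; [:: 0; 0; 0; 1; 0; 1]; [:: 1; 0; 0; 2; 0; 1];
          [:: 0; 1; 2; 0; 1; 0]; [:: 1; 0; 0; 1; 0; 0]; [:: 0; 1; 1; 0; 0; 0]];
      [:: [:: 0; 1; 1; 0; 0; 0]; [:: 1; 0; 0; 1; 0; 0]; [:: 1; 0; 0; 2; 0; 1];
          [:: 0; 1; 2; 0; 1; 0]; [:: 0; 0; 0; 1; 0; 1]; [:: 0; 0; 1; 0; 1; 0]]].

Definition eigvecs_p33 : seq (seq int) :=
  [:: [:: 1; 1; 2; 2; 1; 1];
      [:: 1; -1; -2; 2; -1; 1];
      [:: 0; 1; -1; 0; 1; 0];
      [:: 1; 0; 0; -1; 0; 1];
      [:: -1; 1; 0; 0; -1; 1];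
      [:: -1; -1; 0; 0; 1; 1]]%R.

Definition exps_p33 : seq nat := [:: 0; 1; 3; 3; 6; 7].

Theorem proposition6p7 :
  forall Z : 'M[nat]_8, Z \in [:: Zp22; Z2; Z4; Z7; Z22; Z33; Zp33] ->
    (exists n (G : 'I_8 -> 'M[nat]_n), matches Z G) /\
    (forall n (G1 G2 : 'I_8 -> 'M[nat]_n),
        matches Z G1 -> matches Z G2 -> nimrep_equiv G1 G2).
Proof.
move=> Z; rewrite !inE; have certified := @matching_nimrep_unique 5.
do 6?[case/orP=> [/eqP->|]]; try move/eqP->.
- by apply: (certified _ nimrep_p22 eigvecs_p22 exps_p22); vm_compute.
- by apply: (certified _ nimrep_2 eigvecs_2 exps_2); vm_compute.
- by apply: (certified _ nimrep_4 eigvecs_4 exps_4); vm_compute.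
- by apply: (certified _ nimrep_7 eigvecs_7 exps_7); vm_compute.
- by apply: (certified _ nimrep_22 eigvecs_22 exps_22); vm_compute.
- by apply: (certified _ nimrep_33 eigvecs_33 exps_33); vm_compute.
- by apply: (certified _ nimrep_p33 eigvecs_p33 exps_p33); vm_compute.
Qed.
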